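(* Let $Q_0$ be the unit cube in $\mathbb R^d$ and $f\in C(Q_0)$. There is $N_0=N_0(d)$ such that the following holds. Let $Q\subset Q_0$ be a cube partitioned into $K^d$ equal cubes $q_i$, $K\ge 8$, with $2q_i\subset Q_0$ for all $i$, and put $N_{\min}=\min_i N_f(q_i)$. If $N_{\min}\ge N_0(d)$, then \[N_f(Q/2)\ge \frac K8 N_{\min}.\]
   Context: For a cube $q$ and $t>0$, $tq$ is the concentric cube with side length multiplied by $t$. For a cube $q$ with $2q\subset Q_0$, $N_f(q)=\log\frac{\max_{2q}|f|}{\max_q|f|}$. *)

From HB Require Import structures.
From mathcomp Require Import all_boot all_order all_algebra.
From mathcomp Require Import all_classical all_reals all_analysis.
Set Implicit Arguments. Unset Strict Implicit. Unset Printing Implicit Defensive.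
Import Order.TTheory GRing.Theory Num.Theory.
Import numFieldNormedType.Exports.
Local Open Scope classical_set_scope.
Local Open Scope ring_scope.

Definition cube (R : realType) (d : nat) (c : 'rV[R]_d) (r : R) : set 'rV[R]_d :=
  [set x | forall i : 'I_d, `|x ord0 i - c ord0 i| <= r].

Definition Q0 {R : realType} (d : nat) : set 'rV[R]_d :=
  [set x | forall i : 'I_d, 0 <= x ord0 i <= 1].

(* max_A |f| (for continuous f on a compact cube this sup is a max). *)
Definition maxabs (R : realType) (d : nat) (f : 'rV[R]_d -> R) (A : set 'rV[R]_d) : R :=
  sup [set `|f x| | x in A].

Definition Nf (R : realType) (d : nat) (f : 'rV[R]_d -> R) (c : 'rV[R]_d) (r : R) : R :=
  ln (maxabs f (cube c (2 * r)) / maxabs f (cube c r)).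

(* Subcube j of the partition of the cube with lower corner a and side s into
   K^d equal cubes: center a + (2 j + 1) s/(2K), half-side s/(2K). *)
Definition subcenter (R : realType) (d K : nat) (a : 'rV[R]_d) (s : R)
  (j : {ffun 'I_d -> 'I_K}) : 'rV[R]_d :=
  \row_i (a ord0 i + ((2 * (j i : nat)).+1)%:R * s / (2 * K%:R)).

From HB Require Import structures.
From mathcomp Require Import all_boot all_order all_algebra.
From mathcomp Require Import all_classical all_reals all_analysis.
From mathcomp Require Import ring lra zify.
Set Implicit Arguments. Unset Strict Implicit. Unset Printing Implicit Defensive.
Import Order.TTheory GRing.Theory Num.Theory.
Import numFieldNormedType.Exports.
Local Open Scope classical_set_scope.
Local Open Scope ring_scope.

(* Doubling
   a subcube q_j which is not on the boundary of the partition only reaches its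
   neighbours, and N_f(q_j) >= N says max_{2 q_j} |f| >= e^N max_{q_j} |f|; hence
   some neighbour of q_j carries e^N times the maximum of q_j.  Starting from a
   subcube meeting the maximum of |f| on Q/2 and walking K/4 steps (which keeps us
   inside Q = 2(Q/2)) gives max_Q |f| >= e^(N K/4) max_(Q/2) |f|, i.e.
   N_f(Q/2) >= (K/4) N >= (K/8) N. *)

Section Cubes.
Variables (R : realType) (d : nat).

Lemma cube_sub (c : 'rV[R]_d) (r r' : R) : r <= r' -> cube c r `<=` cube c r'.
Proof. by move=> rr' x cx i; apply: le_trans (cx i) rr'. Qed.

Lemma cube_neq0 (c : 'rV[R]_d) (r : R) : 0 <= r -> cube c r !=set0.
Proof. by move=> r_ge0; exists c => i; rewrite subrr normr0. Qed.

Lemma compact_Q0 : compact (@Q0 R d).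
Proof.
have -> : @Q0 R d =
    [set v : 'rV[R]_d | forall i, (fun=> `[(0:R), 1]%classic) i (v ord0 i)].
  by apply/seteqP; split => x /= Hx i; move: (Hx i); rewrite /= in_itv.
apply: (@rV_compact R^o d (fun=> `[(0:R), 1]%classic)) => i.
exact: segment_compact.
Qed.

End Cubes.

Section MaxAbs.
Variables (R : realType) (d : nat) (f : 'rV[R]_d -> R).

Lemma maxabs_le (A : set 'rV[R]_d) (y : R) :
  A !=set0 -> (forall x, A x -> `|f x| <= y) -> maxabs f A <= y.
Proof.
move=> [x Ax] Ay; apply: ge_sup; first by exists `|f x|, x.
by move=> _ [z Az <-]; apply: Ay.
Qed.

Hypothesis f_cont : {within @Q0 R d, continuous f}.

Lemma bounded_Q0 : exists M, forall x, @Q0 R d x -> `|f x| <= M.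
Proof.
have [M [_ HM]] := @compact_bounded R R^o _ (continuous_compact f_cont (@compact_Q0 R d)).
exists (M + 1) => x Q0x.
have := HM (M + 1); rewrite ltrDl ltr01 => /(_ isT); apply.
by exists x.
Qed.

Lemma maxabs_ub (B : set 'rV[R]_d) (x : 'rV[R]_d) :
  B `<=` @Q0 R d -> B x -> `|f x| <= maxabs f B.
Proof.
move=> BQ0 Bx; have [M HM] := bounded_Q0.
apply: sup_upper_bound; last by exists x.
split; first by exists `|f x|, x.
by exists M => _ [y By <-]; apply/HM/BQ0.
Qed.

Lemma le_maxabs (A B : set 'rV[R]_d) :
  A !=set0 -> A `<=` B -> B `<=` @Q0 R d -> maxabs f A <= maxabs f B.
Proof. by move=> A0 AB BQ0; apply: maxabs_le => // x /AB; apply: maxabs_ub. Qed.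

Lemma maxabs_cover (I : finType) (P : pred I) (C : I -> set 'rV[R]_d)
    (A : set 'rV[R]_d) :
  A !=set0 -> (forall i, C i `<=` @Q0 R d) -> (forall x, A x -> exists2 i, P i & C i x) ->
  exists2 i, P i & maxabs f A <= maxabs f (C i).
Proof.
move=> [x Ax] CQ0 AC; have [i0 Pi0 _] := AC x Ax.
have [i Pi i_max] := @arg_maxP _ _ _ i0 P (fun i => maxabs f (C i)) Pi0.
exists i => //; apply: maxabs_le; first by exists x.
move=> y /AC[k Pk Cky]; apply: le_trans (i_max k Pk).
exact: maxabs_ub (CQ0 k) Cky.
Qed.

End MaxAbs.

Lemma ler_ln_div (R : realType) (m M N : R) : 0 < m -> 0 < M ->
  (N <= ln (M / m)) = (expR N * m <= M).
Proof.
move=> m_gt0 M_gt0; rewrite -ler_pdivlMr // -ler_expR lnK // posrE.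
exact: divr_gt0.
Qed.

Section Covering.
Variable R : realType.

Lemma interval_cover (h t : R) (lo hi : nat) : 0 <= h -> (lo <= hi)%N ->
  2 * lo%:R * h <= t <= 2 * hi.+1%:R * h ->
  exists2 k : nat, (lo <= k <= hi)%N & `|t - (2 * k%:R + 1) * h| <= h.
Proof.
move=> h_ge0 lo_le; have [n ->] : exists n, hi = (lo + n)%N.
  by exists (hi - lo)%N; rewrite subnKC.
elim: n lo {lo_le} => [|n IH] lo /andP[t_ge t_le].
  exists lo; first by rewrite addn0 leqnn.
  by move: t_le; rewrite addn0 -addn1 natrD ler_norml => t_le; apply/andP; split; lra.
have [t_small|t_big] := lerP t (2 * lo.+1%:R * h).
  exists lo; first by rewrite leqnn leq_addr.
  by move: t_small; rewrite -addn1 natrD ler_norml => ?; apply/andP; split; lra.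
have [|k /andP[k_ge k_le] Hk] := IH lo.+1.
  by rewrite addSnnS (ltW t_big).
by exists k => //; apply/andP; split; lia.
Qed.

Variables (d K : nat).

Lemma subcenterE (a : 'rV[R]_d) (s : R) (j : {ffun 'I_d -> 'I_K}) (i : 'I_d) :
  subcenter a s j ord0 i = a ord0 i + (2 * (j i : nat)%:R + 1) * (s / (2 * K%:R)).
Proof. by rewrite /subcenter mxE; congr (_ + _); rewrite -addn1 natrD natrM mulrA. Qed.

Lemma subcube_cover (a x : 'rV[R]_d) (s : R) (lo hi : 'I_d -> nat) :
  0 <= s -> (forall i, lo i <= hi i < K)%N ->
  (forall i, 2 * (lo i)%:R * (s / (2 * K%:R)) <= x ord0 i - a ord0 i
             <= 2 * (hi i).+1%:R * (s / (2 * K%:R))) ->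
  exists2 j : {ffun 'I_d -> 'I_K}, (forall i, lo i <= j i <= hi i)%N &
    cube (subcenter a s j) (s / (2 * K%:R)) x.
Proof.
move=> s_ge0 lo_hi x_in.
have h_ge0 : 0 <= s / (2 * K%:R) by rewrite divr_ge0 // mulr_ge0.
have coord i : exists k : 'I_K, (lo i <= k <= hi i)%N /\
    `|x ord0 i - (a ord0 i + (2 * (k : nat)%:R + 1) * (s / (2 * K%:R)))|
      <= s / (2 * K%:R).
  have /andP[lo_le hi_lt] := lo_hi i.
  have [k /andP[k_ge k_le] Hk] := interval_cover h_ge0 lo_le (x_in i).
  exists (Ordinal (leq_ltn_trans k_le hi_lt)); rewrite /= k_ge k_le.
  by split => //; rewrite opprD addrA.
have [g Hg] := fin_all_exists coord.
exists [ffun i => g i] => i; rewrite ?subcenterE ffunE; [exact: (Hg i).1 | exact: (Hg i).2].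
Qed.

End Covering.

Definition inner (d K n : nat) (j : {ffun 'I_d -> 'I_K}) : bool :=
  [forall i, (n <= j i)%N && (j i + n < K)%N].

Section Partition.
Variables (R : realType) (d K : nat) (f : 'rV[R]_d -> R) (a : 'rV[R]_d) (s N : R).
Hypotheses (f_cont : {within @Q0 R d, continuous f}) (s_gt0 : 0 < s) (K_gt0 : (0 < K)%N).

Local Notation h := (s / (2 * K%:R)).
Local Notation q j := (cube (subcenter a s j) h).
Local Notation m j := (maxabs f (q j)).
Let ctr := \row_i (a ord0 i + s / 2).
Local Notation D := (K %/ 4)%N.
Local Notation M := (maxabs f (cube ctr (s / 4))).

Hypothesis Q_sub_Q0 : cube ctr (s / 2) `<=` @Q0 R d.
Hypothesis double_subcube_sub_Q0 :
  forall j : {ffun 'I_d -> 'I_K}, cube (subcenter a s j) (2 * h) `<=` @Q0 R d.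
Hypothesis subcube_maxabs_gt0 : forall j : {ffun 'I_d -> 'I_K}, 0 < m j.
Hypothesis Nf_subcube_ge : forall j : {ffun 'I_d -> 'I_K}, N <= Nf f (subcenter a s j) h.

Lemma h_gt0 : 0 < h.
Proof. by rewrite divr_gt0 // mulr_gt0 // ltr0n. Qed.

Lemma sideE : s = 2 * K%:R * h.
Proof. by field; rewrite pnatr_eq0 -lt0n. Qed.

Lemma ctrE i : ctr ord0 i = a ord0 i + s / 2.
Proof. exact: mxE. Qed.

Lemma subcube_sub_Q0 (j : {ffun 'I_d -> 'I_K}) : q j `<=` @Q0 R d.
Proof.
by move=> x qx; apply: double_subcube_sub_Q0; apply: cube_sub qx; have := h_gt0; lra.
Qed.

Lemma double_subcube_cover n (j : {ffun 'I_d -> 'I_K}) : inner n.+1 j ->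
  forall x, cube (subcenter a s j) (2 * h) x ->
  exists2 j' : {ffun 'I_d -> 'I_K}, inner n j' & q j' x.
Proof.
move=> /forallP j_in x x_in.
have [i|i|j' j'_near x_in'] := subcube_cover (K := K) (a := a) (x := x)
  (lo := fun i => (j i).-1) (hi := fun i => (j i).+1) (ltW s_gt0).
- by have /andP[? ?] := j_in i; apply/andP; split; lia.
- have /andP[j_ge _] := j_in i; have := h_gt0.
  have := x_in i; rewrite subcenterE ler_norml -subn1 natrB; last by lia.
  by rewrite -!natr1 => /andP[? ?] ?; apply/andP; split; lra.
- exists j' => //; apply/forallP => i.
  by have /andP[? ?] := j_in i; have /andP[? ?] := j'_near i; apply/andP; split; lia.
Qed.

Lemma maxabs_subcube_grow n (j : {ffun 'I_d -> 'I_K}) : inner n.+1 j ->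
  exists2 j' : {ffun 'I_d -> 'I_K}, inner n j' & expR N * m j <= m j'.
Proof.
move=> j_in; have h_ge0 := ltW h_gt0.
have [j' j'_in grow] := maxabs_cover f_cont (cube_neq0 _ (mulr_ge0 (ler0n _ 2) h_ge0))
  subcube_sub_Q0 (double_subcube_cover j_in).
exists j' => //; apply: le_trans grow.
have m_le : m j <= maxabs f (cube (subcenter a s j) (2 * h)).
  apply: le_maxabs => //; [exact: cube_neq0 | apply: cube_sub; lra].
rewrite -ler_ln_div //; first exact: Nf_subcube_ge.
exact: lt_le_trans (subcube_maxabs_gt0 j) m_le.
Qed.

Lemma half_cube_cover x : cube ctr (s / 4) x ->
  exists2 j : {ffun 'I_d -> 'I_K}, inner D j & q j x.
Proof.
move=> x_in.
have [i|i|j j_in x_in'] := subcube_cover (K := K) (a := a) (x := x)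
  (lo := fun=> D) (hi := fun=> (K - D).-1) (ltW s_gt0).
- by apply/andP; split; lia.
- have D4 : 4 * D%:R <= K%:R :> R by rewrite -natrM ler_nat; lia.
  have := x_in i; rewrite ctrE ler_norml prednK; last by lia.
  rewrite natrB; last by lia.
  have := sideE; have := h_gt0; move: (s / (2 * K%:R)) => h' ? ? /andP[? ?].
  by apply/andP; split; nra.
- by exists j => //; apply/forallP => i; have /andP[? ?] := j_in i; apply/andP; split; lia.
Qed.

Lemma maxabs_chain n : (n <= D)%N ->
  exists2 j : {ffun 'I_d -> 'I_K}, inner (D - n) j & expR (n%:R * N) * M <= m j.
Proof.
elim: n => [_|n IH n_lt].
  have [j j_in M_le] := maxabs_cover f_cont
    (cube_neq0 ctr (ltW (divr_gt0 s_gt0 (ltr0Sn _ 3)))) subcube_sub_Q0 half_cube_cover.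
  by exists j; rewrite ?subn0 // mul0r expR0 mul1r.
have [j j_in M_le] := IH (ltnW n_lt).
have [|j' j'_in grow] := maxabs_subcube_grow (n := (D - n.+1)%N) (j := j).
  by have -> : (D - n.+1).+1 = (D - n)%N by lia.
exists j' => //; apply: le_trans grow.
by rewrite -nat1r mulrDl mul1r expRD -mulrA ler_pM2l ?expR_gt0.
Qed.

Lemma maxabs_half_gt0 : (4 <= K)%N -> 0 < M.
Proof.
move=> K_ge4; pose c := ((K + 3) %/ 4)%N.
have c_lt : (c < K)%N by rewrite /c; lia.
pose j0 : {ffun 'I_d -> 'I_K} := [ffun=> Ordinal c_lt].
apply: lt_le_trans (subcube_maxabs_gt0 j0) _; apply: le_maxabs => //.
- exact: cube_neq0 (ltW h_gt0).
- move=> x x_in i; have := x_in i; rewrite subcenterE ffunE ctrE !ler_norml /=.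
  have c_ge : K%:R <= 4 * c%:R :> R by rewrite -natrM ler_nat /c; lia.
  have c_le : 4 * c%:R + 4 <= 3 * K%:R :> R by rewrite -!natrM -natrD ler_nat /c; lia.
  have := sideE; have := h_gt0; move: (s / (2 * K%:R)) => h' h'_gt0 -> /andP[? ?].
  have : 0 <= (4 * c%:R - K%:R) * h' by rewrite mulr_ge0 //; lra.
  have : 0 <= (3 * K%:R - 4 * c%:R - 4) * h' by rewrite mulr_ge0 //; lra.
  by move=> ? ?; apply/andP; split; lra.
- by apply: subset_trans _ Q_sub_Q0; apply: cube_sub; have := s_gt0; lra.
Qed.

Lemma subcube_sub_Q (j : {ffun 'I_d -> 'I_K}) : q j `<=` cube ctr (2 * (s / 4)).
Proof.
move=> x x_in i; have := x_in i; rewrite subcenterE ctrE !ler_norml.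
have j_lt : (j i)%:R + 1 <= K%:R :> R by rewrite natr1 ler_nat.
have := sideE; have := h_gt0; move: (s / (2 * K%:R)) => h' h'_gt0 -> /andP[? ?].
have : 0 <= (j i)%:R * h' by rewrite mulr_ge0 // ltW.
have : 0 <= (K%:R - (j i)%:R - 1) * h' by rewrite mulr_ge0 //; lra.
by move=> ? ?; apply/andP; split; lra.
Qed.

Theorem Nf_half_ge : 0 <= N -> (8 <= K)%N -> K%:R / 8 * N <= Nf f ctr (s / 4).
Proof.
move=> N_ge0 K_ge8.
have [j _ chain] := maxabs_chain (leqnn D).
have M_gt0 : 0 < M by apply: maxabs_half_gt0; lia.
have mj_le : m j <= maxabs f (cube ctr (2 * (s / 4))).
  apply: le_maxabs => //; [exact: cube_neq0 (ltW h_gt0) | exact: subcube_sub_Q |].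
  by apply: subset_trans _ Q_sub_Q0; apply: cube_sub; have := s_gt0; lra.
have : D%:R * N <= Nf f ctr (s / 4).
  rewrite /Nf ler_ln_div //; first exact: le_trans chain mj_le.
  by apply: lt_le_trans mj_le; apply: lt_le_trans chain; rewrite mulr_gt0 ?expR_gt0.
apply: le_trans; apply: ler_wpM2r => //.
by rewrite ler_pdivrMr // -natrM ler_nat; lia.
Qed.

End Partition.

Theorem lemma4p1 (R : realType) (d : nat) :
  exists N0 : R,
  forall (f : 'rV[R]_d -> R), {within @Q0 R d, continuous f} ->
  forall (a : 'rV[R]_d) (s : R) (K : nat) (Nmin : R),
    0 < s ->
    (8 <= K)%N ->
    (* Q = cube with lower corner a and side s, contained in Q0 *)
    cube (\row_i (a ord0 i + s / 2)) (s / 2) `<=` @Q0 R d ->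
    (* 2 q_j is contained in Q0 for every subcube q_j *)
    (forall j : {ffun 'I_d -> 'I_K},
        cube (subcenter a s j) (2 * (s / (2 * K%:R))) `<=` @Q0 R d) ->
    (* N_f(q_j) is well defined: max_{q_j} |f| > 0 *)
    (forall j : {ffun 'I_d -> 'I_K},
        0 < maxabs f (cube (subcenter a s j) (s / (2 * K%:R)))) ->
    (* Nmin = min_j N_f(q_j) *)
    (exists j : {ffun 'I_d -> 'I_K}, Nmin = Nf f (subcenter a s j) (s / (2 * K%:R))) ->
    (forall j : {ffun 'I_d -> 'I_K}, Nmin <= Nf f (subcenter a s j) (s / (2 * K%:R))) ->
    N0 <= Nmin ->
    (* N_f(Q/2) >= K/8 * Nmin *)
    K%:R / 8 * Nmin <= Nf f (\row_i (a ord0 i + s / 2)) (s / 4).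
Proof.
exists 0 => f f_cont a s K Nmin s_gt0 K_ge8 Q_sub double_sub maxabs_gt0 _ Nmin_le Nmin_ge0.
by apply: Nf_half_ge => //; lia.
Qed.
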